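(* Let $N\ge2$, $R\in[0,1]$, $\alpha>0$, and set $K^*(N,p)=|\mathbb S^{N-1}|^{\frac{1-p}{p+1}}\left(\frac{2(p+1)}{p-1}\right)^{\frac{2p}{p+1}}$. Then $$\int_{\partial B}|Du_{\alpha,\mathrm{rad}}|^2d\sigma\le K^*(N,p)\frac{(C_{\alpha,\mathrm{rad}})^{2p/(p+1)}}{(\alpha+1)^{2/(p+1)}}.$$
   Context: $B=B(0,1)\subset\mathbb R^N$, $|\mathbb S^{N-1}|=2\pi^{N/2}/\Gamma(N/2)$; $p\in(1,\frac{N+2}{N-2})$ if $N\ge3$, $p>1$ if $N=2$. Weight $V=V_{R,\alpha}$: for $R\in(0,1)$, $V(r)=(1-r/R)^\alpha$ for $0\le r<R$, $\left(1-\frac{1-r}{1-R}\right)^\alpha$ for $R\le r\le1$; $V=|x|^\alpha$ if $R=0$; $V=(1-|x|)^\alpha$ if $R=1$. $S_{\alpha,\mathrm{rad}}=\inf_{0\ne u\in H^1_{0,\mathrm{rad}}(B)}\frac{\int_B|Du|^2}{(\int_BV|u|^{p+1})^{2/(p+1)}}$; $u^*_{\alpha,\mathrm{rad}}$ is a positive radial minimiser with $\int_BV|u^*_{\alpha,\mathrm{rad}}|^{p+1}=1$, and $u_{\alpha,\mathrm{rad}}=S_{\alpha,\mathrm{rad}}^{1/(p-1)}u^*_{\alpha,\mathrm{rad}}$, which solves $-\Delta u=V(|x|)u^p$ in $B$, $u=0$ on $\partial B$. $C_{\alpha,\mathrm{rad}}=I(u_{\alpha,\mathrm{rad}})$ where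 $I(u)=\frac12\int_B|Du|^2-\frac1{p+1}\int_BV|u|^{p+1}$. *)

From Stdlib Require Import Reals Lra Lia Arith Factorial Classical ClassicalEpsilon.
Open Scope R_scope.

(* Real power x^a for a > 0, with the convention 0^a = 0 (Rpower 0 a = 1 in Stdlib). *)
Definition rpow (x a : R) : R :=
  if Rlt_dec 0 x then Rpower x a else 0.

(* |S^{N-1}| = 2 pi^{N/2} / Gamma(N/2), written out for integer N:
   N = 2m   : 2 pi^m / (m-1)!
   N = 2m+1 : 2 pi^m 4^m m! / (2m)!   (since Gamma(m+1/2) = (2m)! sqrt(pi) / (4^m m!)) *)
Definition surf (N : nat) : R :=
  let m := Nat.div N 2 in
  if Nat.even N then 2 * PI ^ m / INR (fact (m - 1))
  else 2 * PI ^ m * 4 ^ m * INR (fact m) / INR (fact (2 * m)).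

(* The weight V_{R,alpha} as a function of r = |x|. *)
Definition Vw (Rr alpha r : R) : R :=
  if Req_EM_T Rr 0 then rpow r alpha
  else if Req_EM_T Rr 1 then rpow (1 - r) alpha
  else if Rlt_dec r Rr then rpow (1 - r / Rr) alpha
  else rpow (1 - (1 - r) / (1 - Rr)) alpha.

(* Riemann integral on [a,b] as a total function (value of RiemannInt when
   f is Riemann integrable; unspecified otherwise). *)
Definition integ (f : R -> R) (a b : R) : R :=
  epsilon (inhabits 0)
    (fun I => exists pr : Riemann_integrable f a b, RiemannInt pr = I).

Definition C1_on01 (w w' : R -> R) : Prop :=
  (forall r, 0 <= r <= 1 -> derivable_pt_lim w r (w' r)) /\
  (forall r, 0 <= r <= 1 -> forall eps, 0 < eps -> exists delta, 0 < delta /\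
     forall s, 0 <= s <= 1 -> Rabs (s - r) < delta -> Rabs (w' s - w' r) < eps).

(* Radial profiles of nonzero competitors u(x) = w(|x|) vanishing on the boundary. *)
Definition admissible (w w' : R -> R) : Prop :=
  C1_on01 w w' /\ w 1 = 0 /\ exists r, 0 <= r <= 1 /\ w r <> 0.

(* int_B |Du|^2 in polar coordinates *)
Definition Dint (N : nat) (w' : R -> R) : R :=
  surf N * integ (fun r => (w' r) ^ 2 * r ^ (N - 1)) 0 1.

(* int_B V |u|^{p+1} in polar coordinates *)
Definition Pint (N : nat) (p Rr alpha : R) (w : R -> R) : R :=
  surf N * integ (fun r => Vw Rr alpha r * rpow (Rabs (w r)) (p + 1) * r ^ (N - 1)) 0 1.

Definition Quot (N : nat) (p Rr alpha : R) (w w' : R -> R) : R :=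
  Dint N w' / rpow (Pint N p Rr alpha w) (2 / (p + 1)).

Definition RayleighSet (N : nat) (p Rr alpha : R) (q : R) : Prop :=
  exists w w', admissible w w' /\ q = Quot N p Rr alpha w w'.

Definition is_inf (E : R -> Prop) (m : R) : Prop :=
  (forall x, E x -> m <= x) /\ (forall b, (forall x, E x -> b <= x) -> b <= m).

Definition Ienergy (N : nat) (p Rr alpha : R) (u u' : R -> R) : R :=
  / 2 * Dint N u' - / (p + 1) * Pint N p Rr alpha u.

Definition Kstar (N : nat) (p : R) : R :=
  rpow (surf N) ((1 - p) / (p + 1)) * rpow (2 * (p + 1) / (p - 1)) (2 * p / (p + 1)).

From Stdlib Require Import Reals Lra ClassicalEpsilon.
From Coquelicot Require Import Coquelicot.
Open Scope R_scope.

(* Testing the minimality of v against v + t phi with t < 0 gives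
   int v' phi' r^(N-1) <= S int V v^p phi r^(N-1) for every C^1 test function phi
   vanishing at 1.  Cut-offs concentrating at r = 1 turn this into
   0 <= -v'(1) <= S int V v^p r^(N-1), and Hoelder's inequality bounds the right-hand
   side using int V v^(p+1) r^(N-1) = 1/|S^(N-1)| and int V r^(N-1) <= int_0^1 V = 1/(alpha+1).
   Finally u = S^(1/(p-1)) v has energy C = (p-1)/(2(p+1)) S^((p+1)/(p-1)), and the claim
   becomes an identity between powers of S, |S^(N-1)| and alpha + 1. *)

Lemma continuity_pt_of_eps f x :
  (forall eps, 0 < eps -> exists d, 0 < d /\
     forall y, Rabs (y - x) < d -> Rabs (f y - f x) < eps) ->
  continuity_pt f x.
Proof.
  intros H eps Heps. destruct (H eps Heps) as [d [Hd Hy]].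
  exists d; split; [exact Hd|]. intros y [_ Hyx]. exact (Hy y Hyx).
Qed.

Lemma continuity_pt_eps f x : continuity_pt f x ->
  forall eps, 0 < eps -> exists d, 0 < d /\
     forall y, Rabs (y - x) < d -> Rabs (f y - f x) < eps.
Proof.
  intros H eps Heps. destruct (H eps Heps) as [d [Hd Hy]].
  exists d; split; [exact Hd|]. intros y Hyx. destruct (Req_dec y x) as [->|Hne].
  - rewrite Rminus_diag, Rabs_R0. exact Heps.
  - apply Hy. split; [split; [exact I|auto]|exact Hyx].
Qed.

(* Profiles are only controlled on [0,1]; precomposing with the projection
   onto [0,1] turns continuity there into continuity of a function on R. *)
Definition clamp01 (x : R) : R := Rmax 0 (Rmin 1 x).

Lemma clamp01_in x : 0 <= clamp01 x <= 1.
Proof. unfold clamp01, Rmax, Rmin. repeat destruct Rle_dec; lra. Qed.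

Lemma clamp01_id x : 0 <= x <= 1 -> clamp01 x = x.
Proof. intros. unfold clamp01, Rmax, Rmin. repeat destruct Rle_dec; lra. Qed.

Lemma clamp01_lipschitz x y : Rabs (clamp01 y - clamp01 x) <= Rabs (y - x).
Proof.
  unfold clamp01, Rmax, Rmin. repeat destruct Rle_dec;
  unfold Rabs; repeat destruct Rcase_abs; lra.
Qed.

Definition cont01 (f : R -> R) : Prop :=
  forall z, 0 <= z <= 1 -> continuity_pt (fun x => f (clamp01 x)) z.

Lemma cont01_within f :
  (forall r, 0 <= r <= 1 -> forall eps, 0 < eps -> exists d, 0 < d /\
     forall s, 0 <= s <= 1 -> Rabs (s - r) < d -> Rabs (f s - f r) < eps) ->
  cont01 f.
Proof.
  intros H z Hz. apply continuity_pt_of_eps. intros eps Heps.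
  destruct (H z Hz eps Heps) as [d [Hd Hs]]. exists d; split; [exact Hd|].
  intros y Hy. pose proof (clamp01_lipschitz z y) as Hl.
  rewrite (clamp01_id z Hz) in *. apply Hs; [apply clamp01_in|lra].
Qed.

Lemma cont01_within_inv f : cont01 f ->
  forall r, 0 <= r <= 1 -> forall eps, 0 < eps -> exists d, 0 < d /\
     forall s, 0 <= s <= 1 -> Rabs (s - r) < d -> Rabs (f s - f r) < eps.
Proof.
  intros H r Hr eps Heps.
  destruct (continuity_pt_eps _ _ (H r Hr) eps Heps) as [d [Hd Hy]].
  exists d; split; [exact Hd|]. intros s Hs Hsr.
  specialize (Hy s Hsr). rewrite !clamp01_id in Hy; auto.
Qed.

Lemma cont01_continuity_pt f : (forall x, 0 <= x <= 1 -> continuity_pt f x) -> cont01 f.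
Proof.
  intros H. apply cont01_within. intros r Hr eps Heps.
  destruct (continuity_pt_eps _ _ (H r Hr) eps Heps) as [d [Hd Hy]].
  exists d; split; auto.
Qed.

Lemma cont01_ext f g : (forall r, 0 <= r <= 1 -> f r = g r) -> cont01 f -> cont01 g.
Proof.
  intros E H z Hz. apply continuity_pt_ext with (fun x => f (clamp01 x)).
  - intros x. apply E, clamp01_in.
  - exact (H z Hz).
Qed.

Lemma cont01_const c : cont01 (fun _ => c).
Proof. intros z _. apply continuity_pt_const. intros x y; reflexivity. Qed.

Lemma cont01_id : cont01 (fun r => r).
Proof. apply cont01_continuity_pt. intros; apply continuity_pt_id. Qed.

Lemma cont01_plus f g : cont01 f -> cont01 g -> cont01 (fun r => f r + g r).
Proof. intros Hf Hg z Hz. exact (continuity_pt_plus _ _ z (Hf z Hz) (Hg z Hz)). Qed.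

Lemma cont01_mult f g : cont01 f -> cont01 g -> cont01 (fun r => f r * g r).
Proof. intros Hf Hg z Hz. exact (continuity_pt_mult _ _ z (Hf z Hz) (Hg z Hz)). Qed.

Lemma cont01_comp h f : (forall y, continuity_pt h y) -> cont01 f -> cont01 (fun r => h (f r)).
Proof.
  intros Hh Hf z Hz.
  exact (continuity_pt_comp (fun x => f (clamp01 x)) h z (Hf z Hz) (Hh _)).
Qed.

Lemma cont01_pow f n : cont01 f -> cont01 (fun r => f r ^ n).
Proof.
  apply (cont01_comp (fun x => x ^ n)). intros y.
  apply derivable_continuous_pt. exists (INR n * y ^ pred n). apply derivable_pt_lim_pow.
Qed.

Lemma cont01_abs f : cont01 f -> cont01 (fun r => Rabs (f r)).
Proof. apply (cont01_comp Rabs). intros; apply Rcontinuity_abs. Qed.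

Lemma ex_RInt_cont01 f : cont01 f -> ex_RInt f 0 1.
Proof.
  intros H. apply ex_RInt_ext with (fun x => f (clamp01 x)).
  - intros x Hx. rewrite Rmin_left, Rmax_right in Hx by lra. rewrite clamp01_id; lra.
  - apply (ex_RInt_continuous (V := R_CompleteNormedModule)). intros z Hz.
    rewrite Rmin_left, Rmax_right in Hz by lra.
    apply continuity_pt_filterlim, H, Hz.
Qed.

(** * Real powers *)

Lemma rpow_ge0 x a : 0 <= rpow x a.
Proof. unfold rpow. destruct Rlt_dec; [left; apply exp_pos|lra]. Qed.

Lemma rpow_exp x a : 0 < x -> rpow x a = exp (a * ln x).
Proof. intros. unfold rpow. destruct Rlt_dec; [reflexivity|lra]. Qed.

Lemma rpow_gt0 x a : 0 < x -> 0 < rpow x a.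
Proof. intros. rewrite rpow_exp by auto. apply exp_pos. Qed.

Lemma rpow_nonpos x a : x <= 0 -> rpow x a = 0.
Proof. intros. unfold rpow. destruct Rlt_dec; [lra|reflexivity]. Qed.

Lemma rpow_1_l a : rpow 1 a = 1.
Proof. rewrite rpow_exp, ln_1, Rmult_0_r, exp_0 by lra. reflexivity. Qed.

Lemma rpow_succ x a : 0 < x -> rpow x (a + 1) = rpow x a * x.
Proof.
  intros. rewrite !rpow_exp by auto.
  rewrite Rmult_plus_distr_r, exp_plus, Rmult_1_l, exp_ln; auto.
Qed.

Lemma rpow_mult_abs c x a : 0 < c -> rpow (Rabs (c * x)) a = rpow c a * rpow (Rabs x) a.
Proof.
  intros Hc. rewrite Rabs_mult, (Rabs_pos_eq c) by lra.
  destruct (Req_dec (Rabs x) 0) as [E|E].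
  - rewrite E, Rmult_0_r, !(rpow_nonpos 0) by lra. ring.
  - assert (0 < Rabs x) by (pose proof (Rabs_pos x); lra).
    rewrite !rpow_exp, ln_mult, <- exp_plus by (try apply Rmult_lt_0_compat; auto).
    f_equal. ring.
Qed.

Lemma rpow_lt_near_0 a : 0 < a -> forall eps, 0 < eps -> exists d, 0 < d /\
  forall h, Rabs h < d -> rpow h a < eps.
Proof.
  intros Ha eps He. exists (exp (ln eps / a)). split; [apply exp_pos|].
  intros h Hh. destruct (Rlt_dec 0 h) as [Hp|Hn]; [|rewrite rpow_nonpos; lra].
  rewrite rpow_exp by exact Hp. rewrite Rabs_pos_eq in Hh by lra.
  rewrite <- (exp_ln eps) by exact He. apply exp_increasing.
  apply ln_increasing in Hh; [|exact Hp]. rewrite ln_exp in Hh.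
  apply Rmult_lt_compat_l with (r := a) in Hh; [|exact Ha].
  replace (a * (ln eps / a)) with (ln eps) in Hh by (field; lra). exact Hh.
Qed.

Lemma derivable_pt_lim_rpow_pos a y : 0 < y ->
  derivable_pt_lim (fun x => rpow x a) y (a * Rpower y (a - 1)).
Proof.
  intros Hy. apply derivable_pt_lim_locally_ext with (fun x => Rpower x a) 0 (2 * y).
  - lra.
  - intros z Hz. unfold rpow. destruct Rlt_dec; [reflexivity|lra].
  - apply derivable_pt_lim_power, Hy.
Qed.

Lemma derivable_pt_lim_rpow_neg a y : y < 0 -> derivable_pt_lim (fun x => rpow x a) y 0.
Proof.
  intros Hy. apply derivable_pt_lim_locally_ext with (fun _ => 0) (y - 1) 0.
  - lra.
  - intros z Hz. rewrite rpow_nonpos; lra.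
  - apply derivable_pt_lim_const.
Qed.

Lemma continuity_rpow a y : 0 < a -> continuity_pt (fun x => rpow x a) y.
Proof.
  intros Ha. destruct (Rtotal_order y 0) as [Hn|[->|Hp]].
  - apply derivable_continuous_pt. eexists. apply derivable_pt_lim_rpow_neg, Hn.
  - apply continuity_pt_of_eps. intros eps He.
    destruct (rpow_lt_near_0 a Ha eps He) as [d [Hd Hh]]. exists d; split; [exact Hd|].
    intros z Hz. rewrite (rpow_nonpos 0), Rminus_0_r, Rabs_pos_eq by (lra || apply rpow_ge0).
    apply Hh. rewrite Rminus_0_r in Hz. exact Hz.
  - apply derivable_continuous_pt. eexists. apply derivable_pt_lim_rpow_pos, Hp.
Qed.

Lemma derivable_pt_lim_rpow_succ a y : 0 < a ->
  derivable_pt_lim (fun x => rpow x (a + 1)) y ((a + 1) * rpow y a).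
Proof.
  intros Ha. destruct (Rtotal_order y 0) as [Hn|[->|Hp]].
  - rewrite rpow_nonpos, Rmult_0_r by lra. apply derivable_pt_lim_rpow_neg, Hn.
  - intros eps He. destruct (rpow_lt_near_0 a Ha eps He) as [d [Hd Hh]].
    exists (mkposreal d Hd). intros h Hh0 Hhd. simpl in Hhd.
    rewrite !(rpow_nonpos 0), Rplus_0_l, Rminus_0_r, Rmult_0_r, Rminus_0_r by lra.
    destruct (Rlt_dec 0 h) as [Hp|Hn].
    + rewrite rpow_succ by exact Hp.
      replace (rpow h a * h / h) with (rpow h a) by (field; lra).
      rewrite Rabs_pos_eq by apply rpow_ge0. apply Hh, Hhd.
    + rewrite rpow_nonpos by lra. unfold Rdiv. rewrite Rmult_0_l, Rabs_R0. exact He.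
  - replace (rpow y a) with (Rpower y (a + 1 - 1)).
    + apply derivable_pt_lim_rpow_pos, Hp.
    + replace (a + 1 - 1) with a by ring. unfold rpow. destruct Rlt_dec; [reflexivity|lra].
Qed.

Lemma cont01_rpow f a : 0 < a -> cont01 f -> cont01 (fun r => rpow (f r) a).
Proof. intros Ha. apply (cont01_comp (fun x => rpow x a)). intros; apply continuity_rpow, Ha. Qed.

Lemma ln_rpow x a : 0 < x -> ln (rpow x a) = a * ln x.
Proof. intros Hx. rewrite rpow_exp, ln_exp by exact Hx. reflexivity. Qed.

Lemma rpow_plus x a b : 0 < x -> rpow x (a + b) = rpow x a * rpow x b.
Proof. intros Hx. rewrite !rpow_exp, <- exp_plus by exact Hx. f_equal. ring. Qed.

Lemma rpow_1 x : 0 < x -> rpow x 1 = x.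
Proof. intros Hx. rewrite rpow_exp, Rmult_1_l, exp_ln by exact Hx. reflexivity. Qed.

Lemma rpow_rpow x a b : 0 < x -> rpow (rpow x a) b = rpow x (a * b).
Proof.
  intros Hx. rewrite (rpow_exp (rpow x a)), ln_rpow by (auto; apply rpow_gt0, Hx).
  rewrite (rpow_exp x) by exact Hx. f_equal. ring.
Qed.

Lemma rpow_le_base x y a : 0 <= a -> 0 < x <= y -> rpow x a <= rpow y a.
Proof.
  intros Ha Hxy. unfold rpow.
  destruct Rlt_dec; [|lra]. destruct Rlt_dec; [|lra]. apply Rle_Rpower_l; assumption.
Qed.

Ltac positivity := solve [repeat first
  [ assumption | apply Rlt_le | apply Rmult_lt_0_compat | apply Rinv_0_lt_compat
  | apply Rdiv_lt_0_compat | apply rpow_gt0 | apply exp_pos | apply pow_lt | lra ]].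

Lemma flux_bound_algebra sg be S p a : 0 < sg -> 0 < be -> 0 < S -> 1 < p -> 0 <= a ->
  a <= S * rpow (/ sg) (p / (p + 1)) * rpow (/ be) (/ (p + 1)) ->
  sg * (rpow S (1 / (p - 1)) * a) ^ 2 <=
  rpow sg ((1 - p) / (p + 1)) * rpow (2 * (p + 1) / (p - 1)) (2 * p / (p + 1)) *
  rpow ((p - 1) / (2 * (p + 1)) * rpow S ((p + 1) / (p - 1))) (2 * p / (p + 1)) /
  rpow be (2 / (p + 1)).
Proof.
  intros Hsg Hbe HS Hp Ha Hbound.
  set (M := S * rpow (/ sg) (p / (p + 1)) * rpow (/ be) (/ (p + 1))) in Hbound.
  apply Rle_trans with (sg * (rpow S (1 / (p - 1)) * M) ^ 2).
  { apply Rmult_le_compat_l; [lra|]. apply pow_incr.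
    pose proof (rpow_gt0 S (1 / (p - 1)) HS).
    split; [apply Rmult_le_pos|apply Rmult_le_compat_l]; lra. }
  right. unfold M.
  replace (2 * (p + 1) / (p - 1)) with (/ ((p - 1) / (2 * (p + 1)))) by (field; lra).
  apply ln_inv; [positivity|positivity|].
  repeat first [ rewrite ln_mult by positivity | rewrite ln_div by positivity
    | rewrite ln_pow by positivity | rewrite ln_rpow by positivity
    | rewrite ln_Rinv by positivity ].
  simpl INR. field. lra.
Qed.

(** * Integrals over [0,1] and the weight *)

Lemma integ_RInt f a b : ex_RInt f a b -> integ f a b = RInt f a b.
Proof.
  intros H. unfold integ.
  destruct (epsilon_spec (inhabits 0)
    (fun I => exists pr : Riemann_integrable f a b, RiemannInt pr = I)) as [pr Hpr].
  - exists (RiemannInt (ex_RInt_Reals_0 _ _ _ H)). eexists; reflexivity.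
  - rewrite <- Hpr. symmetry. apply RInt_Reals.
Qed.

(* [surf N * radial N f] is the integral of f(|x|) over the unit ball of R^N. *)
Definition radial (N : nat) (f : R -> R) : R := RInt (fun r => f r * r ^ (N - 1)) 0 1.

Section Radial.
Variable N : nat.

Lemma ex_RInt_radial f : cont01 f -> ex_RInt (fun r => f r * r ^ (N - 1)) 0 1.
Proof. intros Hf. apply ex_RInt_cont01, cont01_mult, cont01_pow, cont01_id; exact Hf. Qed.

Lemma integ_radial f : cont01 f -> integ (fun r => f r * r ^ (N - 1)) 0 1 = radial N f.
Proof. intros Hf. apply integ_RInt, ex_RInt_radial, Hf. Qed.

Lemma radial_ext f g : (forall r, 0 <= r <= 1 -> f r = g r) -> radial N f = radial N g.
Proof.
  intros E. apply RInt_ext. intros x Hx. rewrite Rmin_left, Rmax_right in Hx by lra.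
  rewrite E by lra. reflexivity.
Qed.

Lemma radial_plus_scal f g c : cont01 f -> cont01 g ->
  radial N (fun r => f r + c * g r) = radial N f + c * radial N g.
Proof.
  intros Hf Hg. apply ex_RInt_radial in Hf, Hg. unfold radial.
  pose proof (RInt_plus (V := R_CompleteNormedModule) _ _ 0 1 Hf (ex_RInt_scal _ _ _ c Hg)) as E.
  rewrite (RInt_scal (V := R_CompleteNormedModule)) in E by exact Hg.
  etransitivity; [|exact E]. apply RInt_ext. intros x _.
  unfold plus, scal; simpl. unfold mult; simpl. ring.
Qed.

Lemma radial_scal f c : cont01 f -> radial N (fun r => c * f r) = c * radial N f.
Proof.
  intros Hf. apply ex_RInt_radial in Hf. unfold radial.
  rewrite <- (RInt_scal (V := R_CompleteNormedModule)) by exact Hf.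
  apply RInt_ext. intros x _. unfold scal; simpl. unfold mult; simpl. ring.
Qed.

Lemma radial_le f g : cont01 f -> cont01 g ->
  (forall r, 0 <= r <= 1 -> f r <= g r) -> radial N f <= radial N g.
Proof.
  intros Hf Hg Hfg. apply RInt_le; [lra|apply ex_RInt_radial, Hf|apply ex_RInt_radial, Hg|].
  intros x Hx. apply Rmult_le_compat_r; [apply pow_le; lra|apply Hfg; lra].
Qed.

Lemma radial_le_RInt f : cont01 f -> (forall r, 0 <= r <= 1 -> 0 <= f r) ->
  radial N f <= RInt f 0 1.
Proof.
  intros Hf Hpos. apply RInt_le; [lra|apply ex_RInt_radial, Hf|apply ex_RInt_cont01, Hf|].
  intros x Hx. rewrite <- (Rmult_1_r (f x)) at 2.
  apply Rmult_le_compat_l; [apply Hpos; lra|].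
  rewrite <- (pow1 (N - 1)). apply pow_incr. lra.
Qed.

End Radial.

Lemma Dint_radial N w' : cont01 w' -> Dint N w' = surf N * radial N (fun r => w' r ^ 2).
Proof. intros Hw. unfold Dint. rewrite integ_radial by (apply cont01_pow, Hw). reflexivity. Qed.

Lemma is_RInt_rpow01 a : 0 < a -> is_RInt (fun s => rpow s a) 0 1 (/ (a + 1)).
Proof.
  intros Ha.
  assert (H : is_RInt (fun s => / (a + 1) * ((a + 1) * rpow s a)) 0 1
                (minus (/ (a + 1) * rpow 1 (a + 1)) (/ (a + 1) * rpow 0 (a + 1)))).
  { apply (is_RInt_derive (V := R_CompleteNormedModule) (fun s => / (a + 1) * rpow s (a + 1))).
    - intros x _. apply is_derive_Reals.
      apply derivable_pt_lim_scal with (f := fun x => rpow x (a + 1)).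
      apply derivable_pt_lim_rpow_succ, Ha.
    - intros x _. apply continuity_pt_filterlim.
      apply continuity_pt_scal with (f := fun s => (a + 1) * rpow s a).
      apply continuity_pt_scal, continuity_rpow, Ha. }
  rewrite rpow_1_l, (rpow_nonpos 0) in H by lra.
  replace (minus (/ (a + 1) * 1) (/ (a + 1) * 0)) with (/ (a + 1)) in H
    by (unfold minus, plus, opp; simpl; ring).
  eapply is_RInt_ext; [|exact H]. intros x _. simpl. field. lra.
Qed.

Lemma is_RInt_rpow_affine x0 x1 a : 0 < a -> x0 <> x1 ->
  is_RInt (fun x => rpow ((x - x0) / (x1 - x0)) a) x0 x1 ((x1 - x0) / (a + 1)).
Proof.
  intros Ha Hx. set (u := / (x1 - x0)).
  assert (Hu : u * x0 + - x0 * u = 0 /\ u * x1 + - x0 * u = 1) by (unfold u; split; field; lra).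
  pose proof (is_RInt_rpow01 a Ha) as H. rewrite <- (proj1 Hu), <- (proj2 Hu) in H at 1.
  apply is_RInt_comp_lin, (is_RInt_scal _ _ _ (x1 - x0)) in H.
  replace (scal (x1 - x0) (/ (a + 1))) with ((x1 - x0) / (a + 1)) in H
    by (unfold scal; simpl; unfold mult; simpl; field; lra).
  eapply is_RInt_ext; [|exact H]. intros x _. cbv beta. unfold scal; simpl. unfold mult; simpl.
  replace (u * x + - x0 * u) with ((x - x0) / (x1 - x0)) by (unfold u; field; lra).
  unfold u. field. lra.
Qed.

Lemma Vw_ge0 Rr alpha r : 0 <= Vw Rr alpha r.
Proof. unfold Vw. repeat destruct Req_EM_T; try destruct Rlt_dec; apply rpow_ge0. Qed.

(* Each summand vanishes on the side of Rr where its base is nonpositive. *)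
Lemma Vw_split Rr alpha r : 0 < Rr < 1 ->
  Vw Rr alpha r = rpow (1 - r / Rr) alpha + rpow ((r - Rr) / (1 - Rr)) alpha.
Proof.
  intros HR. unfold Vw.
  destruct (Req_EM_T Rr 0); [lra|]. destruct (Req_EM_T Rr 1); [lra|].
  assert (Hi1 : 0 < / Rr) by (apply Rinv_0_lt_compat; lra).
  assert (Hi2 : 0 < / (1 - Rr)) by (apply Rinv_0_lt_compat; lra).
  assert (E1 : 1 - r / Rr = (Rr - r) * / Rr) by (field; lra).
  assert (E2 : 1 - (1 - r) / (1 - Rr) = (r - Rr) / (1 - Rr)) by (field; lra).
  destruct (Rlt_dec r Rr).
  - rewrite (rpow_nonpos ((r - Rr) / (1 - Rr))); [ring|unfold Rdiv; nra].
  - rewrite E2, (rpow_nonpos (1 - r / Rr)); [ring|rewrite E1; nra].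
Qed.

Lemma Vw_cont01 Rr alpha : 0 <= Rr <= 1 -> 0 < alpha -> cont01 (Vw Rr alpha).
Proof.
  intros HR Ha.
  assert (Haff : forall A B, cont01 (fun r => rpow (A + B * r) alpha)).
  { intros A B. apply cont01_rpow, cont01_plus, cont01_mult, cont01_id;
      [exact Ha|apply cont01_const|apply cont01_const]. }
  destruct (Req_dec Rr 0) as [E0|N0]; [|destruct (Req_dec Rr 1) as [E1|N1]].
  - apply cont01_ext with (fun r => rpow (0 + 1 * r) alpha); [|apply Haff].
    intros r _. unfold Vw. destruct (Req_EM_T Rr 0); [|lra]. f_equal; ring.
  - apply cont01_ext with (fun r => rpow (1 + -1 * r) alpha); [|apply Haff].
    intros r _. unfold Vw. destruct (Req_EM_T Rr 0); [lra|].
    destruct (Req_EM_T Rr 1); [|lra]. f_equal; ring.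
  - apply cont01_ext with (fun r => rpow (1 + - / Rr * r) alpha
                                   + rpow (- Rr / (1 - Rr) + / (1 - Rr) * r) alpha).
    + intros r _. rewrite Vw_split by lra. f_equal; f_equal; field; lra.
    + apply cont01_plus; apply Haff.
Qed.

Lemma is_RInt_swap_R f a b l : is_RInt f b a l -> is_RInt f a b (- l).
Proof. exact (is_RInt_swap f a b l). Qed.

Lemma is_RInt_Vw Rr alpha : 0 <= Rr <= 1 -> 0 < alpha ->
  is_RInt (Vw Rr alpha) 0 1 (/ (alpha + 1)).
Proof.
  intros HR Ha. unfold Vw.
  destruct (Req_EM_T Rr 0) as [E0|N0]; [|destruct (Req_EM_T Rr 1) as [E1|N1]].
  - pose proof (is_RInt_rpow_affine 0 1 alpha Ha ltac:(lra)) as H.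
    replace ((1 - 0) / (alpha + 1)) with (/ (alpha + 1)) in H by (field; lra).
    eapply is_RInt_ext; [|exact H]. intros r _. simpl. f_equal. field.
  - pose proof (is_RInt_swap_R _ _ _ _ (is_RInt_rpow_affine 1 0 alpha Ha R1_neq_R0)) as H.
    replace (- ((0 - 1) / (alpha + 1))) with (/ (alpha + 1)) in H by (field; lra).
    eapply is_RInt_ext; [|exact H]. intros r _. simpl. f_equal. field.
  - set (V := fun r => if Rlt_dec r Rr then rpow (1 - r / Rr) alpha
                       else rpow (1 - (1 - r) / (1 - Rr)) alpha).
    assert (H1 : is_RInt V 0 Rr (Rr / (alpha + 1))).
    { pose proof (is_RInt_swap_R _ _ _ _ (is_RInt_rpow_affine Rr 0 alpha Ha N0)) as H.
      replace (- ((0 - Rr) / (alpha + 1))) with (Rr / (alpha + 1)) in H by (field; lra).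
      eapply is_RInt_ext; [|exact H]. intros r Hr.
      rewrite Rmin_left, Rmax_right in Hr by lra.
      unfold V. destruct (Rlt_dec r Rr); [|lra]. f_equal. field. lra. }
    assert (H2 : is_RInt V Rr 1 ((1 - Rr) / (alpha + 1))).
    { eapply is_RInt_ext; [|exact (is_RInt_rpow_affine Rr 1 alpha Ha N1)].
      intros r Hr. rewrite Rmin_left, Rmax_right in Hr by lra.
      unfold V. destruct (Rlt_dec r Rr); [lra|]. f_equal. field. lra. }
    replace (/ (alpha + 1)) with (Rr / (alpha + 1) + (1 - Rr) / (alpha + 1)) by (field; lra).
    exact (is_RInt_Chasles _ _ _ _ _ _ H1 H2).
Qed.

(** * Cut-offs at the boundary *)

(* Since rpow vanishes on nonpositive bases, cutoff h is 1 on [0, 1 - h]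
   and decreases to 0 on [1 - h, 1]. *)
Definition cutoff (h r : R) : R := 1 - rpow ((r - 1 + h) / h) 2.
Definition cutoff' (h r : R) : R := - (2 / h) * rpow ((r - 1 + h) / h) 1.

Section Cutoff.
Variable h : R.
Hypothesis Hh : 0 < h.

Lemma derivable_pt_lim_cutoff_affine r : derivable_pt_lim (fun r => (r - 1 + h) / h) r (/ h).
Proof. apply is_derive_Reals. auto_derive; [exact I|field; lra]. Qed.

Lemma derivable_pt_lim_cutoff r : derivable_pt_lim (cutoff h) r (cutoff' h r).
Proof.
  pose proof (derivable_pt_lim_comp _ (fun x => rpow x (1 + 1)) r _ _
    (derivable_pt_lim_cutoff_affine r) (derivable_pt_lim_rpow_succ 1 _ Rlt_0_1)) as Hc.
  pose proof (derivable_pt_lim_minus (fun _ => 1) _ r _ _ (derivable_pt_lim_const 1 r) Hc) as Hm.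
  replace (cutoff' h r) with (0 - (1 + 1) * rpow ((r - 1 + h) / h) 1 * / h)
    by (unfold cutoff'; field; lra).
  unfold cutoff. replace 2 with (1 + 1) by ring. exact Hm.
Qed.

Lemma continuity_cutoff' r : continuity_pt (cutoff' h) r.
Proof.
  apply continuity_pt_scal with (f := fun r => rpow ((r - 1 + h) / h) 1).
  apply (continuity_pt_comp (fun r => (r - 1 + h) / h) (fun x => rpow x 1)).
  - apply derivable_continuous_pt. eexists. apply derivable_pt_lim_cutoff_affine.
  - apply continuity_rpow, Rlt_0_1.
Qed.

Lemma C1_on01_cutoff : C1_on01 (cutoff h) (cutoff' h).
Proof.
  split.
  - intros r _. apply derivable_pt_lim_cutoff.
  - apply cont01_within_inv, cont01_continuity_pt. intros; apply continuity_cutoff'.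
Qed.

Lemma cutoff_1 : cutoff h 1 = 0.
Proof. unfold cutoff. replace ((1 - 1 + h) / h) with 1 by (field; lra). rewrite rpow_1_l. ring. Qed.

Lemma cutoff_le1 r : cutoff h r <= 1.
Proof. unfold cutoff. pose proof (rpow_ge0 ((r - 1 + h) / h) 2). lra. Qed.

Lemma cutoff'_nonpos r : cutoff' h r <= 0.
Proof.
  unfold cutoff'. pose proof (rpow_ge0 ((r - 1 + h) / h) 1).
  assert (0 < 2 / h) by (apply Rdiv_lt_0_compat; lra). nra.
Qed.

Lemma cutoff_rpow_base_nonpos r : r <= 1 - h -> (r - 1 + h) / h <= 0.
Proof.
  intros Hr. unfold Rdiv. assert (0 < / h) by (apply Rinv_0_lt_compat, Hh). nra.
Qed.

Lemma cutoff'_vanish r : r <= 1 - h -> cutoff' h r = 0.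
Proof.
  intros Hr. unfold cutoff'. rewrite rpow_nonpos by (apply cutoff_rpow_base_nonpos, Hr). ring.
Qed.

Lemma cont01_cutoff' : cont01 (cutoff' h).
Proof. apply cont01_continuity_pt. intros; apply continuity_cutoff'. Qed.

Lemma is_RInt_cutoff' : h < 1 -> is_RInt (cutoff' h) 0 1 (-1).
Proof.
  intros Hh1.
  replace (-1) with (minus (cutoff h 1) (cutoff h 0)).
  - apply (is_RInt_derive (V := R_CompleteNormedModule)).
    + intros x _. apply is_derive_Reals, derivable_pt_lim_cutoff.
    + intros x _. apply continuity_pt_filterlim, continuity_cutoff'.
  - unfold cutoff at 2. rewrite cutoff_1, rpow_nonpos by (apply cutoff_rpow_base_nonpos; lra).
    unfold minus, plus, opp; simpl. ring.
Qed.

End Cutoff.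

Ltac cont01_auto := first
  [ assumption | apply cont01_const | apply cont01_id
  | apply Vw_cont01; lra | apply cont01_cutoff'; lra
  | apply cont01_plus; cont01_auto | apply cont01_mult; cont01_auto
  | apply cont01_pow; cont01_auto | apply cont01_abs; cont01_auto
  | apply cont01_rpow; [lra|cont01_auto] ].

(* As h -> 0, cutoff' h tends to minus the Dirac mass at 1. *)
Lemma radial_cutoff'_trace N g : cont01 g -> forall eps, 0 < eps ->
  exists h, 0 < h < 1 /\ - g 1 <= radial N (fun r => g r * cutoff' h r) + eps.
Proof.
  intros Hg eps He.
  assert (HG : cont01 (fun r => g r * r ^ (N - 1))) by cont01_auto.
  destruct (cont01_within_inv _ HG 1 ltac:(lra) eps He) as [d [Hd Hnear]].
  rewrite pow1, Rmult_1_r in Hnear.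
  set (h := Rmin (d / 2) (1 / 2)).
  assert (Hh : 0 < h < 1)
    by (split; [apply Rmin_pos|apply Rle_lt_trans with (1 / 2); [apply Rmin_r|]]; lra).
  assert (Hhd : h <= d / 2) by apply Rmin_l.
  exists h. split; [exact Hh|].
  enough (- g 1 - eps <= radial N (fun r => g r * cutoff' h r)) by lra.
  assert (Hint : RInt (fun r => (g 1 + eps) * cutoff' h r) 0 1 = - g 1 - eps).
  { apply is_RInt_unique. replace (- g 1 - eps) with ((g 1 + eps) * -1) by ring.
    exact (is_RInt_scal _ _ _ (g 1 + eps) _ (is_RInt_cutoff' h (proj1 Hh) (proj2 Hh))). }
  rewrite <- Hint. unfold radial. apply RInt_le; [lra| | |].
  - apply ex_RInt_cont01. cont01_auto.
  - apply ex_RInt_cont01. cont01_auto.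
  - intros r Hr. destruct (Rle_dec r (1 - h)) as [Hfar|Hclose].
    + rewrite cutoff'_vanish by lra. lra.
    + assert (Hgr : g r * r ^ (N - 1) <= g 1 + eps).
      { assert (Hd' : Rabs (r - 1) < d) by (rewrite Rabs_left1; lra).
        specialize (Hnear r ltac:(lra) Hd'). apply Rabs_def2 in Hnear. lra. }
      pose proof (cutoff'_nonpos h (proj1 Hh) r). nra.
Qed.

Section Functionals.
Variables (N : nat) (p Rr alpha : R).
Hypotheses (Hp : 0 < p) (HR : 0 <= Rr <= 1) (Ha : 0 < alpha).

Lemma Pint_radial w : cont01 w ->
  Pint N p Rr alpha w = surf N * radial N (fun r => Vw Rr alpha r * rpow (Rabs (w r)) (p + 1)).
Proof. intros Hw. unfold Pint. rewrite integ_radial by cont01_auto. reflexivity. Qed.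

Lemma Dint_scale c w' : cont01 w' -> Dint N (fun r => c * w' r) = c ^ 2 * Dint N w'.
Proof.
  intros Hw. rewrite !Dint_radial by cont01_auto.
  rewrite (radial_ext _ _ (fun r => c ^ 2 * w' r ^ 2)) by (intros; ring).
  rewrite radial_scal by cont01_auto. ring.
Qed.

Lemma Pint_scale c w : 0 < c -> cont01 w ->
  Pint N p Rr alpha (fun r => c * w r) = rpow c (p + 1) * Pint N p Rr alpha w.
Proof.
  intros Hc Hw. rewrite !Pint_radial by cont01_auto.
  rewrite (radial_ext _ _ (fun r => rpow c (p + 1) * (Vw Rr alpha r * rpow (Rabs (w r)) (p + 1))))
    by (intros; rewrite rpow_mult_abs by exact Hc; ring).
  rewrite radial_scal by cont01_auto. ring.
Qed.

End Functionals.

Lemma surf_pos N : 0 < surf N.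
Proof.
  unfold surf. pose proof PI_RGT_0.
  pose proof (INR_fact_lt_0 (Nat.div N 2)). pose proof (INR_fact_lt_0 (Nat.div N 2 - 1)).
  pose proof (INR_fact_lt_0 (2 * Nat.div N 2)).
  destruct (Nat.even N); positivity.
Qed.

Lemma C1_on01_cont01 w w' : C1_on01 w w' -> cont01 w /\ cont01 w'.
Proof.
  intros [Hd Hc]. split; [|apply cont01_within, Hc].
  apply cont01_continuity_pt. intros x Hx.
  apply derivable_continuous_pt. eexists. apply Hd, Hx.
Qed.

Lemma C1_on01_plus_scal f f' g g' t : C1_on01 f f' -> C1_on01 g g' ->
  C1_on01 (fun r => f r + t * g r) (fun r => f' r + t * g' r).
Proof.
  intros Hf Hg. pose proof (C1_on01_cont01 _ _ Hf) as [_ Hf'].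
  pose proof (C1_on01_cont01 _ _ Hg) as [_ Hg']. split.
  - intros r Hr. apply (derivable_pt_lim_plus f (mult_real_fct t g)); [apply Hf, Hr|].
    apply derivable_pt_lim_scal, Hg, Hr.
  - apply cont01_within_inv. cont01_auto.
Qed.

Lemma Dint_perturb N f' g' t : cont01 f' -> cont01 g' ->
  Dint N (fun r => f' r + t * g' r) =
  Dint N f' + 2 * t * (surf N * radial N (fun r => f' r * g' r)) + t ^ 2 * Dint N g'.
Proof.
  intros Hf Hg. rewrite !Dint_radial by cont01_auto.
  rewrite (radial_ext _ _ (fun r => (f' r ^ 2 + (2 * t) * (f' r * g' r)) + t ^ 2 * g' r ^ 2))
    by (intros; ring).
  rewrite !radial_plus_scal by cont01_auto. ring.
Qed.

Lemma exp_convex a b t : 0 <= t <= 1 ->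
  exp (t * a + (1 - t) * b) <= t * exp a + (1 - t) * exp b.
Proof.
  intros Ht. set (m := t * a + (1 - t) * b).
  assert (Ea : exp a = exp m * exp (a - m)) by (rewrite <- exp_plus; f_equal; ring).
  assert (Eb : exp b = exp m * exp (b - m)) by (rewrite <- exp_plus; f_equal; ring).
  pose proof (exp_ineq1_le (a - m)). pose proof (exp_ineq1_le (b - m)). pose proof (exp_pos m).
  assert (t * exp (a - m) + (1 - t) * exp (b - m) >= 1).
  { assert (t * (1 + (a - m)) + (1 - t) * (1 + (b - m)) = 1) by (unfold m; ring). nra. }
  rewrite Ea, Eb. nra.
Qed.

Lemma rpow_tangent_le x a p : 0 < p -> 0 <= a ->
  rpow a (p + 1) + (p + 1) * rpow a p * (x - a) <= rpow (Rabs x) (p + 1).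
Proof.
  intros Hp Ha. pose proof (rpow_ge0 (Rabs x) (p + 1)) as Hx0.
  destruct (Req_dec a 0) as [->|Hne]; [rewrite !(rpow_nonpos 0); lra|].
  assert (Ha' : 0 < a) by lra. pose proof (rpow_gt0 a p Ha') as Hap.
  rewrite (rpow_succ a p Ha').
  destruct (Rle_dec x 0) as [Hx|Hx].
  { assert (0 <= rpow a p * (p * a - (p + 1) * x)) by (apply Rmult_le_pos; nra). nra. }
  rewrite Rabs_pos_eq by lra. assert (Hx' : 0 < x) by lra.
  assert (Ht : 0 <= / (p + 1) <= 1).
  { split; [left; apply Rinv_0_lt_compat; lra|].
    rewrite <- Rinv_1. apply Rinv_le_contravar; lra. }
  pose proof (exp_convex ((p + 1) * ln x) ((p + 1) * ln a) _ Ht) as Hc.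
  replace (/ (p + 1) * ((p + 1) * ln x) + (1 - / (p + 1)) * ((p + 1) * ln a))
    with (ln x + p * ln a) in Hc by (field; lra).
  rewrite exp_plus, exp_ln in Hc by exact Hx'.
  rewrite <- (rpow_exp x (p + 1)), <- (rpow_exp a (p + 1)), <- (rpow_exp a p) in Hc
    by assumption.
  rewrite (rpow_succ a p Ha') in Hc.
  apply Rmult_le_compat_l with (r := p + 1) in Hc; [|lra].
  replace ((p + 1) * (/ (p + 1) * rpow x (p + 1) + (1 - / (p + 1)) * (rpow a p * a)))
    with (rpow x (p + 1) + p * (rpow a p * a)) in Hc by (field; lra).
  nra.
Qed.

Lemma young_rpow y p l : 0 < p -> 0 <= y ->
  rpow y p <= p / (p + 1) * exp l * rpow y (p + 1) + / (p + 1) * exp (- p * l).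
Proof.
  intros Hp Hy. pose proof (exp_pos l). pose proof (exp_pos (- p * l)).
  assert (0 < / (p + 1)) by (apply Rinv_0_lt_compat; lra).
  destruct (Req_dec y 0) as [->|Hne]; [rewrite !(rpow_nonpos 0); nra|].
  assert (Hy' : 0 < y) by lra.
  assert (Ht : 0 <= p / (p + 1) <= 1).
  { split; [apply Rlt_le, Rdiv_lt_0_compat; lra|].
    apply (Rmult_le_reg_r (p + 1)); [lra|]. field_simplify; lra. }
  pose proof (exp_convex (l + (p + 1) * ln y) (- p * l) _ Ht) as Hc.
  replace (p / (p + 1) * (l + (p + 1) * ln y) + (1 - p / (p + 1)) * (- p * l))
    with (p * ln y) in Hc by (field; lra).
  rewrite exp_plus, <- !rpow_exp in Hc by exact Hy'.
  replace (1 - p / (p + 1)) with (/ (p + 1)) in Hc by (field; lra). lra.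
Qed.

Lemma rpow_ge_bernoulli y q : 0 < y -> 0 < q -> 1 + q * (1 - / y) <= rpow y q.
Proof.
  intros Hy Hq. rewrite rpow_exp by exact Hy.
  pose proof (exp_ineq1_le (q * ln y)) as Hq1.
  assert (1 - / y <= ln y).
  { pose proof (exp_ineq1_le (ln (/ y))) as Hl.
    rewrite exp_ln, ln_Rinv in Hl by (auto; apply Rinv_0_lt_compat, Hy). lra. }
  nra.
Qed.

(* Young's inequality with the weight exp l chosen optimally. *)
Lemma radial_holder N p w f A B : 0 < p -> 0 < A -> 0 < B -> cont01 w -> cont01 f ->
  (forall r, 0 <= r <= 1 -> 0 <= w r /\ 0 <= f r) ->
  radial N (fun r => w r * rpow (f r) (p + 1)) <= A -> radial N w <= B ->
  radial N (fun r => w r * rpow (f r) p) <= rpow A (p / (p + 1)) * rpow B (/ (p + 1)).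
Proof.
  intros Hp HA HB Hw Hf Hpos HIA HIB.
  set (l := (ln B - ln A) / (p + 1)).
  set (c1 := p / (p + 1) * exp l). set (c2 := / (p + 1) * exp (- p * l)).
  assert (Hc1 : 0 <= c1) by (unfold c1; positivity).
  assert (Hc2 : 0 <= c2) by (unfold c2; positivity).
  apply Rle_trans with (radial N (fun r => c1 * (w r * rpow (f r) (p + 1)) + c2 * w r)).
  { apply radial_le; [cont01_auto|cont01_auto|]. intros r Hr. destruct (Hpos r Hr) as [Hwr Hfr].
    pose proof (young_rpow (f r) p l Hp Hfr) as Y.
    apply Rmult_le_compat_l with (r := w r) in Y; [|exact Hwr].
    unfold c1, c2. nra. }
  rewrite radial_plus_scal, radial_scal by cont01_auto.
  apply Rle_trans with (c1 * A + c2 * B); [nra|].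
  right. rewrite !rpow_exp, <- exp_plus by assumption.
  set (m := p / (p + 1) * ln A + / (p + 1) * ln B).
  assert (E1 : exp m = exp l * A).
  { replace m with (l + ln A) by (unfold l, m; field; lra). rewrite exp_plus, exp_ln; auto. }
  assert (E2 : exp m = exp (- p * l) * B).
  { replace m with (- p * l + ln B) by (unfold l, m; field; lra). rewrite exp_plus, exp_ln; auto. }
  unfold c1, c2. rewrite Rmult_assoc, <- E1, Rmult_assoc, <- E2. field. lra.
Qed.

Lemma le_of_left_limit g c t0 : 0 < t0 -> continuity_pt g 0 ->
  (forall t, - t0 < t < 0 -> c <= g t) -> c <= g 0.
Proof.
  intros Ht0 Hg H. destruct (Rle_dec c (g 0)) as [|Hn]; [assumption|exfalso].
  destruct (continuity_pt_eps g 0 Hg (c - g 0) ltac:(lra)) as [d [Hd Hclose]].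
  set (t := - Rmin (d / 2) (t0 / 2)).
  assert (0 < Rmin (d / 2) (t0 / 2)) by (apply Rmin_pos; lra).
  pose proof (Rmin_l (d / 2) (t0 / 2)). pose proof (Rmin_r (d / 2) (t0 / 2)).
  specialize (H t ltac:(unfold t; lra)).
  specialize (Hclose t ltac:(unfold t; rewrite Rminus_0_r, Rabs_Ropp, Rabs_pos_eq; lra)).
  apply Rabs_def2 in Hclose. lra.
Qed.

(* Both sides of the domination equal S at t = 0, so it compares their slopes there. *)
Lemma slope_le_of_dominates_left S q k A B t0 : 0 <= S -> 0 < q -> 0 < t0 ->
  (forall t, - t0 < t < 0 ->
     0 < 1 + k * t /\ S * rpow (1 + k * t) q <= S + 2 * t * A + t ^ 2 * B) ->
  2 * A <= S * q * k.
Proof.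
  intros HS Hq Ht0 H.
  (* For t < 0, Bernoulli's inequality gives 2 A <= S q k / (1 + k t) - t B; let t -> 0. *)
  replace (S * q * k) with (S * q * k / (1 + k * 0) - 0 * B) by (field; lra).
  apply (le_of_left_limit (fun t => S * q * k / (1 + k * t) - t * B) _ t0 Ht0).
  { apply derivable_continuous_pt, ex_derive_Reals_0. auto_derive.
    intros E. ring_simplify in E. lra. }
  intros t Ht. destruct (H t Ht) as [HD Hdom].
  set (D := 1 + k * t) in *.
  pose proof (rpow_ge_bernoulli D q HD Hq) as Hb.
  apply Rmult_le_compat_l with (r := S) in Hb; [|exact HS].
  assert (E : S * q * (1 - / D) = t * (S * q * k / D)) by (unfold D in *; field; lra).
  set (X := S * q * k / D) in *.
  apply (Rmult_le_reg_l (- t)); [lra|]. nra.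
Qed.

Lemma derivable_pt_lim_nonpos_of_pos_left f x l d : 0 < d ->
  derivable_pt_lim f x l -> f x = 0 -> (forall y, x - d < y < x -> 0 < f y) -> l <= 0.
Proof.
  intros Hd Hf Hfx Hpos. destruct (Rle_dec l 0) as [|Hl]; [assumption|exfalso].
  destruct (Hf l ltac:(lra)) as [del Hdel]. pose proof (cond_pos del).
  set (k := - Rmin (del / 2) (d / 2)).
  assert (0 < Rmin (del / 2) (d / 2)) by (apply Rmin_pos; lra).
  pose proof (Rmin_l (del / 2) (d / 2)). pose proof (Rmin_r (del / 2) (d / 2)).
  specialize (Hdel k ltac:(unfold k; lra) ltac:(unfold k; rewrite Rabs_Ropp, Rabs_pos_eq; lra)).
  rewrite Hfx, Rminus_0_r in Hdel. apply Rabs_def2 in Hdel.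
  assert (0 < f (x + k)) by (apply Hpos; unfold k; lra).
  assert (f (x + k) / k < 0) by (apply Rdiv_pos_neg; [assumption|unfold k; lra]).
  lra.
Qed.

(** * The minimiser *)

Section Minimizer.
Variables (N : nat) (p Rr alpha S : R) (v v' : R -> R).
Hypotheses (Hp : 1 < p) (HR : 0 <= Rr <= 1) (Ha : 0 < alpha)
  (Hinf : is_inf (RayleighSet N p Rr alpha) S) (HS : 0 < S)
  (Hadm : admissible v v') (Hvpos : forall r, 0 <= r < 1 -> 0 < v r)
  (HP : Pint N p Rr alpha v = 1) (HQ : Quot N p Rr alpha v v' = S).

Lemma minimizer_cont01 : cont01 v /\ cont01 v'.
Proof. apply C1_on01_cont01, Hadm. Qed.

Lemma minimizer_nonneg r : 0 <= r <= 1 -> 0 <= v r.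
Proof.
  intros Hr. destruct (Req_dec r 1) as [->|Hr1]; [right; symmetry; apply Hadm|].
  left. apply Hvpos. lra.
Qed.

Lemma minimizer_Pint :
  surf N * radial N (fun r => Vw Rr alpha r * rpow (v r) (p + 1)) = 1.
Proof.
  destruct minimizer_cont01 as [Hv _].
  etransitivity; [|exact HP]. rewrite Pint_radial by (auto; lra). f_equal.
  apply radial_ext. intros r Hr. rewrite Rabs_pos_eq by (apply minimizer_nonneg, Hr).
  reflexivity.
Qed.

Lemma minimizer_Dint : Dint N v' = S.
Proof. rewrite <- HQ. unfold Quot. rewrite HP, rpow_1_l. field. Qed.

Lemma minimizer_Pint_perturb phi t : cont01 phi ->
  1 + (p + 1) * surf N * radial N (fun r => Vw Rr alpha r * rpow (v r) p * phi r) * t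
    <= Pint N p Rr alpha (fun r => v r + t * phi r).
Proof.
  intros Hphi. destruct minimizer_cont01 as [Hv _].
  rewrite Pint_radial by (cont01_auto || lra).
  apply Rle_trans with (surf N * (radial N (fun r => Vw Rr alpha r * rpow (v r) (p + 1))
    + ((p + 1) * t) * radial N (fun r => Vw Rr alpha r * rpow (v r) p * phi r))).
  { right. rewrite Rmult_plus_distr_l, minimizer_Pint. ring. }
  rewrite <- radial_plus_scal by cont01_auto.
  apply Rmult_le_compat_l; [left; apply surf_pos|].
  apply radial_le; [cont01_auto|cont01_auto|]. intros r Hr.
  pose proof (rpow_tangent_le (v r + t * phi r) (v r) p ltac:(lra) (minimizer_nonneg r Hr)).
  pose proof (Vw_ge0 Rr alpha r). nra.
Qed.

Lemma minimizer_perturb_admissible phi phi' t : C1_on01 phi phi' -> phi 1 = 0 ->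
  Rabs t * (Rabs (phi 0) + 1) < v 0 ->
  admissible (fun r => v r + t * phi r) (fun r => v' r + t * phi' r).
Proof.
  intros Hphi Hphi1 Ht. destruct Hadm as [HC [Hv1 _]].
  split; [apply C1_on01_plus_scal; assumption|split].
  - rewrite Hv1, Hphi1. ring.
  - exists 0. split; [lra|].
    assert (Hsmall : Rabs (t * phi 0) < v 0)
      by (rewrite Rabs_mult; pose proof (Rabs_pos t); nra).
    apply Rabs_def2 in Hsmall. lra.
Qed.

Lemma minimizer_Dint_perturb_ge phi phi' t : C1_on01 phi phi' -> phi 1 = 0 ->
  Rabs t * (Rabs (phi 0) + 1) < v 0 ->
  0 < 1 + (p + 1) * surf N * radial N (fun r => Vw Rr alpha r * rpow (v r) p * phi r) * t ->
  S * rpow (1 + (p + 1) * surf N * radial N (fun r => Vw Rr alpha r * rpow (v r) p * phi r) * t)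
         (2 / (p + 1))
    <= Dint N (fun r => v' r + t * phi' r).
Proof.
  intros Hphi Hphi1 Hsmall Hpos. destruct (C1_on01_cont01 _ _ Hphi) as [Hc _].
  pose proof (minimizer_Pint_perturb phi t Hc) as HPt.
  pose proof (proj1 Hinf _ (ex_intro _ _ (ex_intro _ _
    (conj (minimizer_perturb_admissible phi phi' t Hphi Hphi1 Hsmall) eq_refl)))) as HQt.
  unfold Quot in HQt.
  set (Pt := Pint N p Rr alpha (fun r => v r + t * phi r)) in HPt, HQt.
  set (Dt := Dint N (fun r => v' r + t * phi' r)) in HQt |- *.
  assert (HPq : 0 < rpow Pt (2 / (p + 1))) by (apply rpow_gt0; lra).
  apply Rmult_le_compat_r with (r := rpow Pt (2 / (p + 1))) in HQt; [|lra].
  replace (Dt / rpow Pt (2 / (p + 1)) * rpow Pt (2 / (p + 1))) with Dt in HQt by (field; lra).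
  eapply Rle_trans; [|exact HQt]. apply Rmult_le_compat_l; [lra|].
  apply rpow_le_base; [positivity|lra].
Qed.

Lemma minimizer_variational_ineq phi phi' : C1_on01 phi phi' -> phi 1 = 0 ->
  radial N (fun r => v' r * phi' r) <=
  S * radial N (fun r => Vw Rr alpha r * rpow (v r) p * phi r).
Proof.
  intros Hphi Hphi1. destruct (C1_on01_cont01 _ _ Hphi) as [Hc Hc'].
  destruct minimizer_cont01 as [Hv Hv'].
  pose proof (surf_pos N) as Hs. assert (Hv0 : 0 < v 0) by (apply Hvpos; lra).
  set (J := radial N (fun r => Vw Rr alpha r * rpow (v r) p * phi r)).
  set (k := (p + 1) * surf N * J).
  set (t0 := Rmin (v 0 / (Rabs (phi 0) + 1)) (/ (Rabs k + 1))).
  pose proof (Rmin_l (v 0 / (Rabs (phi 0) + 1)) (/ (Rabs k + 1))) as Ht0l. fold t0 in Ht0l.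
  pose proof (Rmin_r (v 0 / (Rabs (phi 0) + 1)) (/ (Rabs k + 1))) as Ht0r. fold t0 in Ht0r.
  pose proof (Rabs_pos k). pose proof (Rabs_pos (phi 0)).
  assert (H2A : 2 * (surf N * radial N (fun r => v' r * phi' r)) <= S * (2 / (p + 1)) * k).
  { apply (slope_le_of_dominates_left _ _ _ _ (Dint N phi') t0); [lra|positivity| |].
    { apply Rmin_pos; positivity. }
    intros t Ht.
    assert (Htk : (Rabs k + 1) * - t < 1).
    { assert (Hti : - t < / (Rabs k + 1)) by lra.
      apply Rmult_lt_compat_l with (r := Rabs k + 1) in Hti; [|lra].
      rewrite Rinv_r in Hti by lra. exact Hti. }
    assert (Hkt : 0 < 1 + k * t) by (pose proof (Rle_abs k); nra).
    assert (Hsmall : Rabs t * (Rabs (phi 0) + 1) < v 0).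
    { rewrite Rabs_left by lra.
      apply Rlt_le_trans with (v 0 / (Rabs (phi 0) + 1) * (Rabs (phi 0) + 1)).
      - apply Rmult_lt_compat_r; lra.
      - right. field. lra. }
    split; [exact Hkt|].
    pose proof (minimizer_Dint_perturb_ge phi phi' t Hphi Hphi1 Hsmall Hkt) as Hdom.
    rewrite Dint_perturb, minimizer_Dint in Hdom by assumption. exact Hdom. }
  unfold k in H2A. apply (Rmult_le_reg_l (2 * surf N)); [lra|].
  replace (S * (2 / (p + 1)) * ((p + 1) * surf N * J)) with (2 * surf N * (S * J)) in H2A
    by (field; lra).
  lra.
Qed.

Lemma minimizer_flux_le : - v' 1 <= S * radial N (fun r => Vw Rr alpha r * rpow (v r) p).
Proof.
  destruct minimizer_cont01 as [Hv Hv'].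
  apply Rle_plus_epsilon. intros eps He.
  destruct (radial_cutoff'_trace N v' Hv' eps He) as [h [Hh Htrace]].
  pose proof (C1_on01_cutoff h (proj1 Hh)) as Hcut.
  pose proof (minimizer_variational_ineq _ _ Hcut (cutoff_1 h (proj1 Hh))) as Hvar.
  destruct (C1_on01_cont01 _ _ Hcut) as [Hc _].
  assert (Hle : radial N (fun r => Vw Rr alpha r * rpow (v r) p * cutoff h r)
                <= radial N (fun r => Vw Rr alpha r * rpow (v r) p)).
  { apply radial_le; [cont01_auto|cont01_auto|]. intros r _.
    pose proof (cutoff_le1 h r). pose proof (Vw_ge0 Rr alpha r). pose proof (rpow_ge0 (v r) p).
    assert (0 <= Vw Rr alpha r * rpow (v r) p) by (apply Rmult_le_pos; assumption). nra. }
  apply Rmult_le_compat_l with (r := S) in Hle; lra.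
Qed.

Lemma minimizer_flux_nonpos : v' 1 <= 0.
Proof.
  destruct Hadm as [[Hd _] [Hv1 _]].
  apply (derivable_pt_lim_nonpos_of_pos_left v 1 (v' 1) 1); [lra|apply Hd; lra|exact Hv1|].
  intros y Hy. apply Hvpos. lra.
Qed.

Lemma minimizer_holder : radial N (fun r => Vw Rr alpha r * rpow (v r) p)
  <= rpow (/ surf N) (p / (p + 1)) * rpow (/ (alpha + 1)) (/ (p + 1)).
Proof.
  destruct minimizer_cont01 as [Hv _]. pose proof (surf_pos N).
  apply radial_holder; [lra|positivity|positivity|cont01_auto|exact Hv| | |].
  - intros r Hr. split; [apply Vw_ge0|apply minimizer_nonneg, Hr].
  - right. apply (Rmult_eq_reg_l (surf N)); [|lra]. rewrite minimizer_Pint. field. lra.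
  - rewrite <- (is_RInt_unique _ _ _ _ (is_RInt_Vw Rr alpha HR Ha)).
    apply radial_le_RInt; [cont01_auto|]. intros; apply Vw_ge0.
Qed.

Lemma minimizer_energy :
  Ienergy N p Rr alpha (fun r => rpow S (1 / (p - 1)) * v r) (fun r => rpow S (1 / (p - 1)) * v' r)
  = (p - 1) / (2 * (p + 1)) * rpow S ((p + 1) / (p - 1)).
Proof.
  destruct minimizer_cont01 as [Hv Hv'].
  unfold Ienergy.
  rewrite Dint_scale, Pint_scale, minimizer_Dint, HP by (lra || positivity || assumption).
  rewrite rpow_rpow by exact HS.
  replace ((p + 1) / (p - 1)) with (1 / (p - 1) + 1 / (p - 1) + 1) by (field; lra).
  replace (1 / (p - 1) * (p + 1)) with (1 / (p - 1) + 1 / (p - 1) + 1) by (field; lra).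
  rewrite !rpow_plus, rpow_1 by exact HS. field. lra.
Qed.
End Minimizer.

Theorem mainTheorem9 (N : nat) (p Rr alpha S : R) (v v' : R -> R) :
  (2 <= N)%nat -> 1 < p -> ((3 <= N)%nat -> p < (INR N + 2) / (INR N - 2)) ->
  0 <= Rr <= 1 -> 0 < alpha ->
  is_inf (RayleighSet N p Rr alpha) S ->
  admissible v v' ->
  (forall r, 0 <= r < 1 -> 0 < v r) ->
  Pint N p Rr alpha v = 1 ->
  Quot N p Rr alpha v v' = S ->
  let c := rpow S (1 / (p - 1)) in
  let u := fun r => c * v r in
  let u' := fun r => c * v' r in
  let C := Ienergy N p Rr alpha u u' in
  surf N * (u' 1) ^ 2 <=
    Kstar N p * rpow C (2 * p / (p + 1)) / rpow (alpha + 1) (2 / (p + 1)).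
Proof.
  (* N >= 2 and the subcriticality of p only serve the existence of a minimiser. *)
  intros _ Hp _ HR Ha Hinf Hadm Hvpos HP HQ c u u' C.
  destruct (Rle_dec S 0) as [HS0|HS].
  { unfold u', c. rewrite rpow_nonpos by exact HS0.
    replace (surf N * (0 * v' 1) ^ 2) with 0 by ring.
    unfold Kstar, Rdiv. pose proof (rpow_gt0 (alpha + 1) (2 / (p + 1)) ltac:(lra)).
    repeat apply Rmult_le_pos; apply rpow_ge0 || positivity. }
  apply Rnot_le_lt in HS.
  pose proof (minimizer_flux_le N p Rr alpha S v v' Hp HR Ha Hinf HS Hadm Hvpos HP HQ) as Hflux.
  pose proof (minimizer_flux_nonpos v v' Hadm Hvpos) as Hsign.
  pose proof (minimizer_holder N p Rr alpha v v' Hp HR Ha Hadm Hvpos HP) as Hholder.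
  unfold C, u, u', c. rewrite (minimizer_energy N p Rr alpha S v v' Hp HR Ha HS Hadm HP HQ).
  replace ((rpow S (1 / (p - 1)) * v' 1) ^ 2) with ((rpow S (1 / (p - 1)) * - v' 1) ^ 2) by ring.
  apply flux_bound_algebra; [apply surf_pos|lra|exact HS|exact Hp|lra|].
  rewrite Rmult_assoc. eapply Rle_trans; [exact Hflux|].
  apply Rmult_le_compat_l; [lra|exact Hholder].
Qed.
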